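(* Let $q$ be a prime power, $l\ge1$, $t=q^l$, and let $i$ be an integer with $1\le i<q-1$. Let $G_1(x)=x^{t-1}+1$, $G_2(x)=x^t+x$, and $L_1^*=\{\alpha\in GF(t^2):\ \alpha\neq0,\ G_1(\alpha)\ne0\}=\{\alpha_1,\dots,\alpha_{n}\}$. Let $H_1^{*(i)}$ be the $i(t-1)\times n$ matrix with entries $\alpha_k^s/G_1(\alpha_k)^i$ ($s=0,\dots,i(t-1)-1$, $k=1,\dots,n$). Then the matrix obtained by placing the row $\big(1/G_2(\alpha_1)^i,\dots,1/G_2(\alpha_n)^i\big)$ on top of $H_1^{*(i)}$ is a parity-check matrix of $\Gamma_2^{(i)}=\Gamma(L_1^*,G_2^i)$; that is, $\Gamma_2^{(i)}=\{c\in\Gamma_1^{*(i)}:\ \sum_{k}c_k/G_2(\alpha_k)^i=0\}$ where $\Gamma_1^{*(i)}=\Gamma(L_1^*,G_1^i)$, and the entries $1/G_2(\alpha_k)^i$ all lie in $GF(t)$.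
   Context: For a set $L=\{\alpha_1,\dots,\alpha_n\}$ of distinct elements of $GF(t^2)$ and $P\in GF(t^2)[x]$ with $P(\alpha_k)\neq0$ for all $k$, the $q$-ary Goppa code is $\Gamma(L,P)=\{c\in GF(q)^n:\ \sum_k c_k\alpha_k^s/P(\alpha_k)=0 \text{ for } s=0,\dots,\deg P-1\}$. A matrix $H$ over $GF(t^2)$ is a parity-check matrix of a $q$-ary code $C$ if $C=\{c\in GF(q)^n: cH^T=0\}$. *)

From HB Require Import structures.
From mathcomp Require Import all_boot all_order all_algebra all_field.
Set Implicit Arguments. Unset Strict Implicit. Unset Printing Implicit Defensive.
Import GRing.Theory.
Local Open Scope ring_scope.

(* GF(q) inside a finite field F is the set of roots of x^q - x. *)
Definition in_GF (F : fieldType) (q : nat) (x : F) : bool := x ^+ q == x.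

Definition goppa_code (F : fieldType) (q : nat) (L : seq F) (P : {poly F})
  (c : 'rV[F]_(size L)) : bool :=
  [forall j, in_GF q (c 0 j)] &&
  [forall s : 'I_(size P).-1,
      \sum_(k < size L) c 0 k * L`_k ^+ s / P.[L`_k] == 0].

Definition parity_check (F : fieldType) (q m n : nat) (H : 'M[F]_(m, n))
  (C : pred 'rV[F]_n) : Prop :=
  forall c : 'rV[F]_n, C c = [forall j, in_GF q (c 0 j)] && (c *m H^T == 0).

Definition prime_power (q : nat) : Prop :=
  exists p k : nat, [/\ prime p, (0 < k)%N & q = (p ^ k)%N].

Definition G1 (F : fieldType) (t : nat) : {poly F} := 'X^(t.-1) + 1.
Definition G2 (F : fieldType) (t : nat) : {poly F} := 'X^t + 'X.

(* L_1^* = {alpha in GF(t^2) : alpha <> 0, G1(alpha) <> 0}, listed in the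
   (fixed) enumeration order of F. *)
Definition L1star (F : finFieldType) (t : nat) : seq F :=
  [seq a <- enum F | (a != 0) && ((G1 F t).[a] != 0)].

Definition H1star (F : finFieldType) (t i : nat) :
  'M[F]_((i * t.-1)%N, size (L1star F t)) :=
  \matrix_(s, k) ((L1star F t)`_k ^+ s / (G1 F t).[(L1star F t)`_k] ^+ i).

Definition G2row (F : finFieldType) (t i : nat) : 'rV[F]_(size (L1star F t)) :=
  \row_k ((G2 F t).[(L1star F t)`_k] ^+ i)^-1.

Definition H2 (F : finFieldType) (t i : nat) :
  'M[F]_(1 + i * t.-1, size (L1star F t)) :=
  col_mx (G2row F t i) (H1star F t i).

Arguments goppa_code {F} q L P c.
Arguments parity_check {F} q {m n} H C.

(* On L1* we have G2(a) = a G1(a), so for s >= i the s-th syndrome of G2^i is the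
   (s - i)-th syndrome of G1^i; the case s = 0 is the extra row.  For 0 < s < i the
   Frobenius x |-> x^t fixes the c_k and the values G2(a) (they lie in GF(t)), and maps
   a^s / G2(a)^i to a^(st - i) / G1(a)^i because G1(a)^t = G1(a) / a^(t-1) when a^(t^2) = a;
   so these syndromes are Frobenius images of syndromes of G1^i with index st - i < i(t-1). *)
From HB Require Import structures.
From mathcomp Require Import all_boot all_order all_algebra all_field.
From mathcomp Require Import zify ring.
Set Implicit Arguments. Unset Strict Implicit. Unset Printing Implicit Defensive.
Import GRing.Theory.
Local Open Scope ring_scope.

Definition goppa_syndrome (F : fieldType) (L : seq F) (P : {poly F})
    (c : 'rV[F]_(size L)) (s : nat) : F :=
  \sum_(k < size L) c 0 k * L`_k ^+ s / P.[L`_k].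
Arguments goppa_syndrome {F} L P c s.

Lemma goppaP (F : fieldType) q (L : seq F) (P : {poly F}) (c : 'rV[F]_(size L)) :
  reflect ((forall j, in_GF q (c 0 j)) /\
           (forall s, (s < (size P).-1)%N -> goppa_syndrome L P c s = 0))
          (goppa_code q L P c).
Proof.
apply: (iffP andP) => [[/forallP GFc /forallP syn0] | [GFc syn0]].
  by split=> // s lt_s; apply/eqP/(syn0 (Ordinal lt_s)).
by split; apply/forallP => // s; apply/eqP/syn0.
Qed.

Lemma in_GF_expn (F : fieldType) q l (x : F) : in_GF q x -> in_GF (q ^ l) x.
Proof.
move=> /eqP xq; apply/eqP; elim: l => [|l IHl]; first by rewrite expr1.
by rewrite expnSr exprM IHl.
Qed.

Lemma mulmx_tr_eq0 (R : pzRingType) m n (c : 'rV[R]_n) (H : 'M[R]_(m, n)) :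
  (c *m H^T == 0) = [forall s, \sum_k c 0 k * H s k == 0].
Proof.
have cHE s : (c *m H^T) 0 s = \sum_k c 0 k * H s k.
  by rewrite mxE; apply: eq_bigr => k _; rewrite mxE.
apply/eqP/forallP => [cH0 s | syn0]; first by rewrite -cHE cH0 mxE.
by apply/rowP => s; rewrite cHE mxE; apply/eqP.
Qed.

Lemma mulmx_tr_row_eq0 (R : pzRingType) n (c r : 'rV[R]_n) :
  (c *m r^T == 0) = (\sum_k c 0 k * r 0 k == 0).
Proof.
rewrite mulmx_tr_eq0; apply/forallP/idP => [/(_ 0) // | syn0 s].
by rewrite ord1.
Qed.

Lemma goppa_parity_check (F : fieldType) q (L : seq F) (P : {poly F}) m
    (H : 'M[F]_(m, size L)) :
  m = (size P).-1 -> (forall s k, H s k = L`_k ^+ s / P.[L`_k]) ->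
  parity_check q H (goppa_code q L P).
Proof.
move=> m_eq HE c; rewrite mulmx_tr_eq0; congr (_ && _); subst m.
have synE s : \sum_k c 0 k * H s k = \sum_k c 0 k * L`_k ^+ s / P.[L`_k].
  by apply: eq_bigr => k _; rewrite HE mulrA.
by apply/forallP/forallP => syn0 s; [rewrite synE | rewrite -synE]; apply: syn0.
Qed.

Lemma parity_check_col_mx (F : fieldType) q m n (r : 'rV[F]_n) (H : 'M[F]_(m, n))
    (C C' : pred 'rV[F]_n) :
  parity_check q H C -> (forall c, C' c = C c && (c *m r^T == 0)) ->
  parity_check q (col_mx r H) C'.
Proof.
move=> HC C'E c; rewrite C'E HC tr_col_mx mul_mx_row row_mx_eq0.
by rewrite -andbA [X in _ && X]andbC.
Qed.

Lemma pchar_nat_prime_power (F : finFieldType) (p k m : nat) :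
  prime p -> #|F| = (p ^ m)%N -> [pchar F].-nat (p ^ k)%N.
Proof.
move=> p_pr cardF; rewrite pnatX pnatE //.
by rewrite (card_finPcharP cardF p_pr).
Qed.

Section FieldOfOrderTSquared.

Variables (F : finFieldType) (t : nat).
Hypothesis t_pchar : [pchar F].-nat t.
Hypothesis cardF : #|F| = (t ^ 2)%N.
Hypothesis t_gt1 : (1 < t)%N.

Local Notation L := (L1star F t).

Lemma frobeniusD (x y : F) : (x + y) ^+ t = x ^+ t + y ^+ t.
Proof. exact: exprDn_pchar. Qed.

Lemma frobenius_sum n (f : 'I_n -> F) : (\sum_j f j) ^+ t = \sum_j f j ^+ t.
Proof.
apply: (big_morph (fun x : F => x ^+ t)); first exact: frobeniusD.
by rewrite expr0n gtn_eqF // ltnW.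
Qed.

Lemma frobenius_eq0 (x : F) : (x ^+ t == 0) = (x == 0).
Proof. by rewrite expf_eq0; case: eqP => //; lia. Qed.

Lemma exprtt (x : F) : x ^+ (t * t) = x.
Proof. by rewrite mulnn -cardF expf_card. Qed.

Lemma hornerG1 (a : F) : (G1 F t).[a] = a ^+ t.-1 + 1.
Proof. by rewrite /G1 !hornerE. Qed.

Lemma hornerG2 (a : F) : (G2 F t).[a] = a * (G1 F t).[a].
Proof. by rewrite /G2 hornerG1 !hornerE mulrDr mulr1 -exprS prednK //; lia. Qed.

Lemma size_G1_exp i : (size (G1 F t ^+ i)).-1 = (i * t.-1)%N.
Proof. by rewrite size_exp /G1 -polyC1 size_XnaddC /=; lia. Qed.

Lemma size_G2_exp i : (size (G2 F t ^+ i)).-1 = (i * t)%N.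
Proof. by rewrite size_exp /G2 size_polyDl ?size_polyXn ?size_polyX /=; lia. Qed.

Lemma G2_frobenius (a : F) : (G2 F t).[a] ^+ t = (G2 F t).[a].
Proof. by rewrite /G2 !hornerE frobeniusD -exprM exprtt addrC. Qed.

Lemma G2_exp_inv_in_GF i (a : F) : in_GF t (((G2 F t).[a] ^+ i)^-1).
Proof. by rewrite /in_GF exprVn -exprM mulnC exprM G2_frobenius. Qed.

Lemma G1_frobenius (a : F) : a != 0 -> a ^+ t.-1 * (G1 F t).[a] ^+ t = (G1 F t).[a].
Proof.
move=> a0; rewrite hornerG1 frobeniusD expr1n -exprM mulrDr mulr1 -exprD addrC.
congr (_ + _); apply: (mulIf a0); rewrite mul1r -exprSr.
have -> : (t.-1 + t.-1 * t).+1 = (t * t)%N by nia.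
exact: exprtt.
Qed.

Lemma mem_L1star (a : F) : (a \in L) = (a != 0) && ((G1 F t).[a] != 0).
Proof. by rewrite mem_filter mem_enum andbT. Qed.

Lemma L1star_nth (k : 'I_(size L)) : L`_k != 0 /\ (G1 F t).[L`_k] != 0.
Proof. by apply/andP; rewrite -mem_L1star mem_nth. Qed.

Section Syndromes.

Variables (i : nat) (c : 'rV[F]_(size L)).

Lemma syndrome_G2_exp_shift s :
  goppa_syndrome L (G2 F t ^+ i) c (s + i) = goppa_syndrome L (G1 F t ^+ i) c s.
Proof.
apply: eq_bigr => k _; have [a0 G1a0] := L1star_nth k.
rewrite !horner_exp hornerG2 exprMn exprD.
by field; rewrite ?expf_neq0 ?mulf_neq0.
Qed.

Lemma syndrome_G2_exp_0 :
  goppa_syndrome L (G2 F t ^+ i) c 0 = \sum_k c 0 k / (G2 F t).[L`_k] ^+ i.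
Proof. by apply: eq_bigr => k _; rewrite expr0 mulr1 horner_exp. Qed.

Lemma syndrome_G2_exp_frobenius s :
  (forall k, c 0 k ^+ t = c 0 k) -> (i <= s * t)%N ->
  goppa_syndrome L (G2 F t ^+ i) c s ^+ t =
  goppa_syndrome L (G1 F t ^+ i) c (s * t - i).
Proof.
move=> ct i_le; rewrite frobenius_sum; apply: eq_bigr => k _.
have [a0 G1a0] := L1star_nth k; set a := L`_k.
have G1iE : (G1 F t).[a] ^+ i = a ^+ (i * t.-1) * (G1 F t).[a] ^+ (i * t).
  by rewrite -{1}(G1_frobenius a0) exprMn -!exprM mulnC [(t * i)%N]mulnC.
rewrite !horner_exp hornerG2 G1iE !exprMn exprVn !exprMn -!exprM ct.
have -> : (i * t = i * t.-1 + i)%N by nia.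
rewrite -{1}(subnK i_le) !exprD.
by field; rewrite ?expf_neq0 ?mulf_neq0.
Qed.

End Syndromes.

Variables (q i : nat).
Hypothesis GFq_GFt : forall x : F, in_GF q x -> in_GF t x.
Hypotheses (i_gt0 : (0 < i)%N) (i_lt_t : (i < t)%N).

Lemma goppa_G2_exp (c : 'rV[F]_(size L)) :
  goppa_code q L (G2 F t ^+ i) c =
  goppa_code q L (G1 F t ^+ i) c && (goppa_syndrome L (G2 F t ^+ i) c 0 == 0).
Proof.
apply/goppaP/andP; rewrite size_G2_exp.
  move=> [GFc syn0]; split; last by apply/eqP/syn0; nia.
  apply/goppaP; split=> // s; rewrite size_G1_exp => lt_s.
  by rewrite -syndrome_G2_exp_shift syn0 //; nia.
case=> /goppaP[GFc]; rewrite size_G1_exp => syn0 /eqP syn00; split=> // s lt_s.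
have [s_lt_i | i_le_s] := ltnP s i; last first.
  by rewrite -(subnK i_le_s) syndrome_G2_exp_shift syn0 //; nia.
have [-> // | s_gt0] := posnP s.
have ct k : c 0 k ^+ t = c 0 k by apply/eqP/GFq_GFt/GFc.
apply/eqP; rewrite -frobenius_eq0 syndrome_G2_exp_frobenius //; last by nia.
by rewrite syn0 //; nia.
Qed.

End FieldOfOrderTSquared.

Theorem lemma4 (F : finFieldType) (q l t i : nat) :
  prime_power q -> (1 <= l)%N -> t = (q ^ l)%N -> #|F| = (t ^ 2)%N ->
  (1 <= i)%N -> (i < q - 1)%N ->
  [/\ parity_check q (H2 F t i)
        (goppa_code q (L1star F t) (G2 F t ^+ i)),
      (forall c : 'rV[F]_(size (L1star F t)),
         goppa_code q (L1star F t) (G2 F t ^+ i) c =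
         goppa_code q (L1star F t) (G1 F t ^+ i) c &&
         (\sum_(k < size (L1star F t))
             c 0 k / (G2 F t).[(L1star F t)`_k] ^+ i == 0))
    & (forall k : 'I_(size (L1star F t)),
         in_GF t (((G2 F t).[(L1star F t)`_k] ^+ i)^-1))].
Proof.
move=> [p [k [p_pr k_gt0 q_def]]] l_gt0 t_def cardF i_gt0 i_lt_q.
have q_le_t : (q <= t)%N.
  by rewrite t_def -{1}(expn1 q) leq_pexp2l // q_def expn_gt0 prime_gt0.
have i_lt_t : (i < t)%N by lia.
have t_gt1 : (1 < t)%N by lia.
have t_pchar : [pchar F].-nat t.
  rewrite t_def q_def -expnM; apply: pchar_nat_prime_power p_pr _.
  by rewrite cardF t_def q_def -!expnM.
have GFq_GFt (x : F) : in_GF q x -> in_GF t x by rewrite t_def; apply: in_GF_expn.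
have Gamma2E c : goppa_code q (L1star F t) (G2 F t ^+ i) c =
    goppa_code q (L1star F t) (G1 F t ^+ i) c &&
    (\sum_(k < size (L1star F t)) c 0 k / (G2 F t).[(L1star F t)`_k] ^+ i == 0).
  by rewrite (goppa_G2_exp t_pchar cardF t_gt1 GFq_GFt i_gt0 i_lt_t) syndrome_G2_exp_0.
have Gamma1_H1 : parity_check q (H1star F t i) (goppa_code q (L1star F t) (G1 F t ^+ i)).
  by apply: goppa_parity_check => [|s j]; rewrite ?size_G1_exp // mxE horner_exp.
split=> // [|j]; last exact: G2_exp_inv_in_GF.
rewrite /H2; apply: parity_check_col_mx Gamma1_H1 _ => c.
rewrite Gamma2E mulmx_tr_row_eq0; apply: andb_id2l => _.
by under [in RHS]eq_bigr do rewrite mxE.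
Qed.
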